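(* Let a group $G$ act equicontinuously on a uniform space $(X,S)$, and let $T$ be an $S$-compatible topology on $X$. Let $(x_\alpha)$ be a net in $X$ converging to $x$ in the topology $T_S$, and let $(g_\alpha)$ be a net in $G$ indexed by the same directed set. Then for every $y\in X$: the net $(g_\alpha x_\alpha)$ converges to $y$ in $T$ if and only if the net $(g_\alpha x)$ converges to $y$ in $T$.
   Context: A uniform structure $S$ on a set $X$ is a filter of subsets of $X\times X$, each containing the diagonal, closed under inversion, such that for every $U\in S$ there is $U'\in S$ with $U'U'\subset U$ ($U_1U_2=\{(u_1,u_2):\exists u_3,(u_1,u_3)\in U_1,(u_3,u_2)\in U_2\}$). For $V\subset X$, $UV=\{v:\exists v'\in V,(v,v')\in U\}$. $T_S$ is the topology generated by the sets $U\{x\}$, $U\in S$, $x\in X$. A topology $T$ is $S$-compatible if for every $V\in T$ and $y\in V$ there exist $V'\in T$ with $y\in V'$ and $U\in S$ with $UV'\subset V$. The action is equicontinuous if for every $U\in S$, $\{(u,v):(gu,gv)\in U\ \forall g\in G\}\in S$. *)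

From Stdlib Require Import Classical.

Set Implicit Arguments.

Definition rcomp (X : Type) (U1 U2 : X -> X -> Prop) : X -> X -> Prop :=
  fun u1 u2 => exists u3, U1 u1 u3 /\ U2 u3 u2.

Definition rimage (X : Type) (U : X -> X -> Prop) (V : X -> Prop) : X -> Prop :=
  fun v => exists v', V v' /\ U v v'.

Definition rsubset (X : Type) (U1 U2 : X -> X -> Prop) : Prop :=
  forall u v, U1 u v -> U2 u v.

Definition subset (X : Type) (V1 V2 : X -> Prop) : Prop :=
  forall x, V1 x -> V2 x.

Definition is_filter (X : Type) (S : (X -> X -> Prop) -> Prop) : Prop :=
  S (fun _ _ => True) /\
  (forall U U', S U -> rsubset U U' -> S U') /\
  (forall U U', S U -> S U' -> S (fun u v => U u v /\ U' u v)).

Definition uniform_structure (X : Type) (S : (X -> X -> Prop) -> Prop) : Prop :=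
  is_filter S /\
  (forall U, S U -> forall x, U x x) /\
  (forall U, S U -> S (fun u v => U v u)) /\
  (forall U, S U -> exists U', S U' /\ rsubset (rcomp U' U') U).

Definition is_topology (X : Type) (T : (X -> Prop) -> Prop) : Prop :=
  T (fun _ => False) /\
  T (fun _ => True) /\
  (forall F : (X -> Prop) -> Prop, (forall V, F V -> T V) ->
     T (fun x => exists V, F V /\ V x)) /\
  (forall V V', T V -> T V' -> T (fun x => V x /\ V' x)).

(* T_S : the topology generated by the sets U{x}, U in S, x in X
   (the smallest topology containing them). *)
Definition T_S (X : Type) (S : (X -> X -> Prop) -> Prop) : (X -> Prop) -> Prop :=
  fun V => forall T' : (X -> Prop) -> Prop, is_topology T' ->
    (forall U x, S U -> T' (rimage U (fun z => z = x))) -> T' V.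

Definition S_compatible (X : Type) (S : (X -> X -> Prop) -> Prop)
    (T : (X -> Prop) -> Prop) : Prop :=
  forall V, T V -> forall y, V y ->
    exists V' U, T V' /\ V' y /\ S U /\ subset (rimage U V') V.

Record Group := {
  gcar :> Type;
  gmul : gcar -> gcar -> gcar;
  gone : gcar;
  ginv : gcar -> gcar;
  gmulA : forall a b c, gmul a (gmul b c) = gmul (gmul a b) c;
  gmul1l : forall a, gmul gone a = a;
  gmul1r : forall a, gmul a gone = a;
  gmulVl : forall a, gmul (ginv a) a = gone;
  gmulVr : forall a, gmul a (ginv a) = gone
}.

Definition is_action (G : Group) (X : Type) (act : G -> X -> X) : Prop :=
  (forall x, act (gone G) x = x) /\
  (forall g h x, act (gmul G g h) x = act g (act h x)).

Definition equicontinuous (G : Group) (X : Type) (S : (X -> X -> Prop) -> Prop)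
    (act : G -> X -> X) : Prop :=
  forall U, S U -> S (fun u v => forall g : G, U (act g u) (act g v)).

Definition directed (D : Type) (le : D -> D -> Prop) : Prop :=
  inhabited D /\
  (forall a, le a a) /\
  (forall a b c, le a b -> le b c -> le a c) /\
  (forall a b, exists c, le a c /\ le b c).

Definition net_converges (D X : Type) (le : D -> D -> Prop)
    (T : (X -> Prop) -> Prop) (xa : D -> X) (y : X) : Prop :=
  forall V, T V -> V y -> exists a0, forall a, le a0 a -> V (xa a).


Set Implicit Arguments.

(* Convergence in [T_S] makes [x_a] eventually [U]-close to [x] for every
   entourage [U]; equicontinuity transports this closeness uniformly along any
   net of group elements; and an [S]-compatible topology cannot distinguish two
   nets that are eventually [U]-close for every entourage [U]. *)

Definition eventually (D : Type) (le : D -> D -> Prop) (P : D -> Prop) : Prop :=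
  exists a0, forall a, le a0 a -> P a.

Definition eventually_close (D X : Type) (le : D -> D -> Prop)
    (S : (X -> X -> Prop) -> Prop) (za wa : D -> X) : Prop :=
  forall U, S U -> eventually le (fun a => U (za a) (wa a)).

Lemma T_S_entourage_ball_open (X : Type) (S : (X -> X -> Prop) -> Prop)
    (U : X -> X -> Prop) (x : X) :
  S U -> T_S S (rimage U (fun z => z = x)).
Proof. intros HU T' _ Hgen. apply Hgen. exact HU. Qed.

Lemma T_S_converges_eventually_close (D X : Type) (le : D -> D -> Prop)
    (S : (X -> X -> Prop) -> Prop) (Hrefl : forall U, S U -> forall x, U x x)
    (xa : D -> X) (x : X) :
  net_converges le (T_S S) xa x -> eventually_close le S xa (fun _ => x).
Proof.
  intros Hconv U HU.
  destruct (Hconv (rimage U (fun z => z = x))) as [a0 Ha0].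
  - apply T_S_entourage_ball_open. exact HU.
  - exists x. split; [reflexivity | apply Hrefl; exact HU].
  - exists a0. intros a Ha. destruct (Ha0 a Ha) as [v' [-> Hv]]. exact Hv.
Qed.

Lemma eventually_close_sym (D X : Type) (le : D -> D -> Prop)
    (S : (X -> X -> Prop) -> Prop) (Hsym : forall U, S U -> S (fun u v => U v u))
    (za wa : D -> X) :
  eventually_close le S za wa -> eventually_close le S wa za.
Proof. intros Hclose U HU. exact (Hclose _ (Hsym U HU)). Qed.

Lemma eventually_close_act (G : Group) (D X : Type) (le : D -> D -> Prop)
    (S : (X -> X -> Prop) -> Prop) (act : G -> X -> X)
    (Heq : @equicontinuous G X S act) (ga : D -> G) (za wa : D -> X) :
  eventually_close le S za wa ->
  eventually_close le S (fun a => act (ga a) (za a)) (fun a => act (ga a) (wa a)).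
Proof.
  intros Hclose U HU.
  destruct (Hclose _ (Heq U HU)) as [a0 Ha0].
  exists a0. intros a Ha. exact (Ha0 a Ha (ga a)).
Qed.

Lemma net_converges_eventually_close (D X : Type) (le : D -> D -> Prop)
    (HD : directed le) (S : (X -> X -> Prop) -> Prop)
    (T : (X -> Prop) -> Prop) (HTc : S_compatible S T)
    (za wa : D -> X) (y : X) :
  eventually_close le S za wa ->
  net_converges le T wa y -> net_converges le T za y.
Proof.
  destruct HD as [_ [_ [Htrans Hupper]]].
  intros Hclose Hwa V HV Vy.
  destruct (HTc V HV y Vy) as [V' [U [HV' [V'y [HU HUV']]]]].
  destruct (Hwa V' HV' V'y) as [a1 Ha1].
  destruct (Hclose U HU) as [a2 Ha2].
  destruct (Hupper a1 a2) as [a0 [Ha10 Ha20]].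
  exists a0. intros a Ha. apply HUV'.
  exists (wa a). split.
  - apply Ha1. exact (Htrans _ _ _ Ha10 Ha).
  - apply Ha2. exact (Htrans _ _ _ Ha20 Ha).
Qed.

Theorem lemma2p7 (G : Group) (X : Type) (act : G -> X -> X)
    (Hact : @is_action G X act)
    (S : (X -> X -> Prop) -> Prop) (HS : uniform_structure S)
    (Heq : @equicontinuous G X S act)
    (T : (X -> Prop) -> Prop) (HT : is_topology T) (HTc : S_compatible S T)
    (D : Type) (le : D -> D -> Prop) (HD : directed le)
    (xa : D -> X) (x : X) (Hconv : net_converges le (T_S S) xa x)
    (ga : D -> G) :
  forall y : X,
    net_converges le T (fun a => act (ga a) (xa a)) y <->
    net_converges le T (fun a => act (ga a) x) y.
Proof.
  destruct HS as [_ [Hrefl [Hsym _]]].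
  assert (Hclose : eventually_close le S
                     (fun a => act (ga a) (xa a)) (fun a => act (ga a) x)).
  { apply (eventually_close_act Heq).
    exact (T_S_converges_eventually_close Hrefl Hconv). }
  intros y; split; apply (net_converges_eventually_close HD HTc).
  - exact (eventually_close_sym Hsym Hclose).
  - exact Hclose.
Qed.
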